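(* Let $N, K \geq 2$ be integers, let $N_0>0$, $P>0$, $T>0$, and fix an index $i \in \{1,\ldots,K\}$. Let $\mathbf{s}_k \in \mathbb{C}^N$ for $k \neq i$ be given and fixed, and consider $$\operatorname{SINR}(\mathbf{s}_i)_i = \left\{ \frac{1}{6N^2}\sum_{k=1, k\neq i}^K \sum_{m=1}^N S_m^{i,k} + \frac{N_0}{2PT}\right\}^{-1/2}$$ as a function of $\mathbf{s}_i \in \mathbb{C}^N$ subject to $\|\mathbf{s}_i\|^2 = N$. Let $\lambda^{(i)}_{\min}\ (\geq 0)$ be the minimum eigenvalue of the positive semidefinite Hermitian matrix $$\Sigma_i = \sum_{k=1, k \neq i}^K \sum_{m=1}^N \left[(\mathbf{s}_k^* Q_m \mathbf{s}_k) Q_m + (\mathbf{s}_k^* \hat{Q}_m \mathbf{s}_k)\hat{Q}_m\right],$$ and let $\mathbf{u}_i$ be a corresponding eigenvector with $\|\mathbf{u}_i\|=1$. Then $\mathbf{s}_i^\star = \sqrt{N}\,\mathbf{u}_i$ maximizes $\operatorname{SINR}(\mathbf{s}_i)_i$ over all $\mathbf{s}_i\in\mathbb{C}^N$ with $\|\mathbf{s}_i\|^2=N$, and the maximum value is $$\operatorname{SINR}_i^\star = \operatorname{SINR}(\mathbf{s}_i^\star)_i = \left\{\frac{\lambda^{(i)}_{\min}}{6N} + \frac{N_0}{2PT}\right\}^{-1/2}.$$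
   Context: Indices run over $1,\ldots,N$; $j$ is the imaginary unit and $\mathbf{z}^*$ denotes conjugate transpose. $V$ and $\hat V$ are the $N\times N$ unitary matrices with entries $V_{m,n} = \frac{1}{\sqrt N}\exp(-2\pi j \frac{mn}{N})$ and $\hat V_{m,n} = \frac{1}{\sqrt N}\exp\!\left(-2\pi j n(\frac{m}{N} + \frac{1}{2N})\right)$. For $m=1,\ldots,N$, $C_m$ (resp. $\hat C_m$) is the $N\times N$ diagonal matrix whose only nonzero entry is the $(m,m)$ entry, equal to $\sqrt{1+\frac12\cos(2\pi \frac mN)}$ (resp. $\sqrt{1+\frac12\cos(2\pi(\frac mN+\frac1{2N}))}$). Set $Q_m = V^* C_m V$ and $\hat Q_m = \hat V^* \hat C_m \hat V$. For sequences $\mathbf{s}_i,\mathbf{s}_k\in\mathbb{C}^N$, $S_m^{i,k} = (\mathbf{s}_i^* Q_m \mathbf{s}_i)(\mathbf{s}_k^* Q_m \mathbf{s}_k) + (\mathbf{s}_i^* \hat Q_m \mathbf{s}_i)(\mathbf{s}_k^* \hat Q_m \mathbf{s}_k)$. (This SINR models user $i$ of a $K$-user asynchronous BPSK CDMA system with spreading sequences $\mathbf{s}_k$ of length $N$, signal power $P$, symbol duration $T$ and noise spectral density $N_0/2$.) *)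

From mathcomp Require Import all_boot all_order all_algebra.
From mathcomp Require Import all_classical all_reals all_analysis.
From mathcomp Require Import complex.
Set Implicit Arguments. Unset Strict Implicit. Unset Printing Implicit Defensive.
Import GRing.Theory Num.Theory.
Local Open Scope ring_scope.

(* exp(-2 pi j theta) = cos(2 pi theta) - j sin(2 pi theta) *)
Definition cexpm2pij (R : realType) (theta : R) : R[i] :=
  Complex (cos (2 * pi * theta)) (- sin (2 * pi * theta)).

(* Indices run over 1..N; the ordinal a : 'I_N stands for the index a.+1. *)
Definition Vmx (R : realType) (N : nat) : 'M[R[i]]_N :=
  \matrix_(a, b)
    ((Complex (Num.sqrt (N%:R : R))^-1 0) *
     cexpm2pij ((a.+1 * b.+1)%:R / N%:R : R)).

Definition Vhatmx (R : realType) (N : nat) : 'M[R[i]]_N :=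
  \matrix_(a, b)
    ((Complex (Num.sqrt (N%:R : R))^-1 0) *
     cexpm2pij ((b.+1)%:R * ((a.+1)%:R / N%:R + (2 * N%:R)^-1) : R)).

Definition Cmx (R : realType) (N : nat) (m : 'I_N) : 'M[R[i]]_N :=
  \matrix_(a, b)
    (if (a == m) && (b == m) then
       Complex (Num.sqrt (1 + 2^-1 * cos (2 * pi * ((m.+1)%:R / N%:R)))) 0
     else 0).

Definition Chatmx (R : realType) (N : nat) (m : 'I_N) : 'M[R[i]]_N :=
  \matrix_(a, b)
    (if (a == m) && (b == m) then
       Complex (Num.sqrt (1 + 2^-1 * cos (2 * pi * ((m.+1)%:R / N%:R
                                                   + (2 * N%:R)^-1)))) 0
     else 0).

Definition adjmx (R : realType) (m n : nat) (A : 'M[R[i]]_(m, n)) : 'M[R[i]]_(n, m) :=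
  (map_mx (@conjc R) A)^T.

Definition Qmx (R : realType) (N : nat) (m : 'I_N) : 'M[R[i]]_N :=
  adjmx (Vmx R N) *m Cmx R m *m Vmx R N.

Definition Qhatmx (R : realType) (N : nat) (m : 'I_N) : 'M[R[i]]_N :=
  adjmx (Vhatmx R N) *m Chatmx R m *m Vhatmx R N.

Definition qform (R : realType) (N : nat) (z : 'cV[R[i]]_N) (A : 'M[R[i]]_N) : R[i] :=
  (adjmx z *m A *m z) ord0 ord0.

Definition sqnorm (R : realType) (N : nat) (z : 'cV[R[i]]_N) : R :=
  complex.Re ((adjmx z *m z) ord0 ord0).

Definition Smik (R : realType) (N : nat) (m : 'I_N) (si sk : 'cV[R[i]]_N) : R[i] :=
  qform si (Qmx R m) * qform sk (Qmx R m) + qform si (Qhatmx R m) * qform sk (Qhatmx R m).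

(* SINR of user i when its sequence is x and the others are s k, k <> i.
   The interference sum is real (Hermitian forms); we take its real part. *)
Definition SINR (R : realType) (N K : nat) (N0 P T : R)
    (s : 'I_K -> 'cV[R[i]]_N) (i : 'I_K) (x : 'cV[R[i]]_N) : R :=
  ((6 * (N%:R) ^+ 2)^-1 *
     complex.Re (\sum_(k < K | k != i) \sum_(m < N) Smik m x (s k))
   + N0 / (2 * P * T)) `^ (- 2^-1).

Definition Sigma (R : realType) (N K : nat) (s : 'I_K -> 'cV[R[i]]_N) (i : 'I_K)
  : 'M[R[i]]_N :=
  \sum_(k < K | k != i) \sum_(m < N)
     (qform (s k) (Qmx R m) *: Qmx R m + qform (s k) (Qhatmx R m) *: Qhatmx R m).

(* Every Q_m (and likewise every hat Q_m) is V^* C_m V with C_m = c e_m e_m^* and c >= 0,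
   hence Hermitian positive semidefinite.  The interference term sum_k sum_m S_m^{i,k} is
   the quadratic form s_i^* Sigma_i s_i, and Sigma_i, a nonnegative combination of the Q_m
   and hat Q_m, is Hermitian positive semidefinite too.  The SINR is a decreasing function
   of this form, so on the sphere ||s_i||^2 = N it is maximal where the form is
   minimal.  Writing Sigma_i = P^* D P by the spectral theorem, every diagonal entry of D is
   an eigenvalue, so Sigma_i - lambda_min is P^* (D - lambda_min) P >= 0: the form is at
   least N lambda_min on the sphere, with equality at sqrt N u_i. *)
From mathcomp Require Import all_boot all_order all_algebra.
From mathcomp Require Import all_classical all_reals all_analysis.
From mathcomp Require Import complex sesquilinear spectral.
From mathcomp Require Import ring.
Set Implicit Arguments. Unset Strict Implicit. Unset Printing Implicit Defensive.
Import Order.TTheory GRing.Theory Num.Theory.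
Local Open Scope ring_scope.
Local Open Scope complex_scope.

Section Adjoint.
Variable R : realType.
Local Notation C := R[i].

Lemma adjmxE m n (A : 'M[C]_(m, n)) : adjmx A = (A ^t* )%sesqui.
Proof. by apply/matrixP => a b; rewrite !mxE. Qed.

Lemma adjmxK m n (A : 'M[C]_(m, n)) : adjmx (adjmx A) = A.
Proof. by apply/matrixP => a b; rewrite !mxE conjcK. Qed.

Lemma adjmx_mul m n p (A : 'M[C]_(m, n)) (B : 'M[C]_(n, p)) :
  adjmx (A *m B) = adjmx B *m adjmx A.
Proof. by rewrite /adjmx map_mxM trmx_mul. Qed.

Lemma adjmxD m n (A B : 'M[C]_(m, n)) : adjmx (A + B) = adjmx A + adjmx B.
Proof. by apply/matrixP => a b; rewrite !mxE rmorphD. Qed.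

Lemma adjmxZ m n a (A : 'M[C]_(m, n)) : adjmx (a *: A) = conjc a *: adjmx A.
Proof. by apply/matrixP => x y; rewrite !mxE rmorphM. Qed.

Lemma adjmx_sum m n (I : Type) (r : seq I) (P : pred I) (F : I -> 'M[C]_(m, n)) :
  adjmx (\sum_(k <- r | P k) F k) = \sum_(k <- r | P k) adjmx (F k).
Proof.
apply: (big_morph _ (@adjmxD m n)).
by apply/matrixP => a b; rewrite !mxE rmorph0.
Qed.

Lemma adjmx_delta n (a b : 'I_n) : adjmx (delta_mx a b : 'M[C]_n) = delta_mx b a.
Proof.
by apply/matrixP => x y; rewrite !mxE andbC; case: andP; rewrite ?conjc1 ?conjc0.
Qed.

End Adjoint.

Section QuadraticForm.
Variables (R : realType) (n : nat).
Local Notation C := R[i].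
Implicit Types (x y : 'cV[C]_n) (A B : 'M[C]_n).

Lemma qformDr x A B : qform x (A + B) = qform x A + qform x B.
Proof. by rewrite /qform mulmxDr mulmxDl mxE. Qed.

Lemma qformZr x a A : qform x (a *: A) = a * qform x A.
Proof. by rewrite /qform -scalemxAr -scalemxAl mxE. Qed.

Lemma qformBr x A B : qform x (A - B) = qform x A - qform x B.
Proof. by rewrite qformDr -scaleN1r qformZr mulN1r. Qed.

Lemma qform_sumr x (I : Type) (r : seq I) (P : pred I) (F : I -> 'M[C]_n) :
  qform x (\sum_(k <- r | P k) F k) = \sum_(k <- r | P k) qform x (F k).
Proof.
apply: (big_morph _ (qformDr x)).
by rewrite /qform mulmx0 mul0mx mxE.
Qed.

Lemma qformZl a x A : qform (a *: x) A = conjc a * a * qform x A.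
Proof. by rewrite /qform adjmxZ -!scalemxAl -scalemxAr scalerA mxE. Qed.

Lemma qform_mulmx x (W : 'M[C]_n) A : qform x (adjmx W *m A *m W) = qform (W *m x) A.
Proof. by rewrite /qform adjmx_mul !mulmxA. Qed.

Lemma qform_delta x (a : 'I_n) : qform x (delta_mx a a) = conjc (x a 0) * x a 0.
Proof.
rewrite /qform mxE (bigD1 a) //= big1 ?addr0 => [|b /negbTE ba]; last first.
  by rewrite mxE big1 ?mul0r // => c _; rewrite !mxE ba andbF mulr0.
rewrite mxE (bigD1 a) //= big1 ?addr0 => [|c /negbTE ca]; last by rewrite !mxE ca mulr0.
by rewrite !mxE !eqxx mulr1.
Qed.

Lemma qform1 x : qform x 1%:M = (sqnorm x)%:C.
Proof.
have x_ge0 : 0 <= qform x 1%:M.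
  rewrite /qform mulmx1 mxE; apply: sumr_ge0 => j _.
  by rewrite !mxE mulrC mulcJ_ge0.
move: x_ge0; rewrite /sqnorm /qform mulmx1.
by case: (_ ord0 ord0) => a b; rewrite lecE /= => /andP[/eqP -> _].
Qed.

Lemma qform_eigenvector A (lam : C) x : A *m x = lam *: x -> qform x A = lam * (sqnorm x)%:C.
Proof. by move=> Ax; rewrite -qform1 /qform mulmx1 -mulmxA Ax -scalemxAr mxE. Qed.

Lemma sqnormZ (r : R) x : sqnorm (r%:C *: x) = r ^+ 2 * sqnorm x.
Proof.
have := qformZl r%:C x 1%:M.
by rewrite !qform1 conjc_real -!rmorphM -expr2 => -[].
Qed.

End QuadraticForm.

Section PositiveSemidefinite.
Variables (R : realType) (n : nat).
Local Notation C := R[i].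
Implicit Types (A D W : 'M[C]_n).

Definition psdmx A := forall x, 0 <= qform x A.

Lemma ge0_conjc (a : C) : 0 <= a -> conjc a = a.
Proof. by case: a => a b; rewrite lecE /= => /andP[/eqP -> _]; rewrite oppr0. Qed.

Lemma psdmxD A B : psdmx A -> psdmx B -> psdmx (A + B).
Proof. by move=> A_psd B_psd x; rewrite qformDr addr_ge0. Qed.

Lemma psdmxZ (a : C) A : 0 <= a -> psdmx A -> psdmx (a *: A).
Proof. by move=> a_ge0 A_psd x; rewrite qformZr mulr_ge0. Qed.

Lemma psdmx_sum (I : Type) (r : seq I) (P : pred I) (F : I -> 'M[C]_n) :
  (forall k, P k -> psdmx (F k)) -> psdmx (\sum_(k <- r | P k) F k).
Proof. by move=> F_psd x; rewrite qform_sumr sumr_ge0 // => k /F_psd. Qed.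

Lemma psdmx_conj W D : psdmx D -> psdmx (adjmx W *m D *m W).
Proof. by move=> D_psd x; rewrite qform_mulmx. Qed.

Lemma psdmx_delta (a : 'I_n) : psdmx (delta_mx a a).
Proof. by move=> x; rewrite qform_delta mulrC mulcJ_ge0. Qed.

Lemma adjmx_conj W D : adjmx D = D -> adjmx (adjmx W *m D *m W) = adjmx W *m D *m W.
Proof. by move=> D_herm; rewrite !adjmx_mul adjmxK D_herm mulmxA. Qed.

Lemma adjmx_real_delta (c : R) (a : 'I_n) :
  adjmx (c%:C *: delta_mx a a : 'M[C]_n) = c%:C *: delta_mx a a.
Proof. by rewrite adjmxZ adjmx_delta conjc_real. Qed.

End PositiveSemidefinite.

Section InterferenceMatrix.
Variables (R : realType) (N K : nat).
Local Notation C := R[i].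
Variables (s : 'I_K -> 'cV[C]_N) (i : 'I_K).

Lemma single_entry_mxE (m : 'I_N) (c : R) :
  \matrix_(a, b) (if (a == m) && (b == m) then Complex c 0 else 0) = c%:C *: delta_mx m m.
Proof. by apply/matrixP => a b; rewrite !mxE; case: andP; rewrite ?mulr1 ?mulr0. Qed.

Lemma Qmx_psd (m : 'I_N) : psdmx (Qmx R m).
Proof.
rewrite /Qmx /Cmx single_entry_mxE.
by apply/psdmx_conj/psdmxZ/psdmx_delta; rewrite ler0c sqrtr_ge0.
Qed.

Lemma Qhatmx_psd (m : 'I_N) : psdmx (Qhatmx R m).
Proof.
rewrite /Qhatmx /Chatmx single_entry_mxE.
by apply/psdmx_conj/psdmxZ/psdmx_delta; rewrite ler0c sqrtr_ge0.
Qed.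

Lemma Qmx_herm (m : 'I_N) : adjmx (Qmx R m) = Qmx R m.
Proof. by rewrite /Qmx /Cmx single_entry_mxE adjmx_conj ?adjmx_real_delta. Qed.

Lemma Qhatmx_herm (m : 'I_N) : adjmx (Qhatmx R m) = Qhatmx R m.
Proof. by rewrite /Qhatmx /Chatmx single_entry_mxE adjmx_conj ?adjmx_real_delta. Qed.

Lemma Sigma_psd : psdmx (Sigma s i).
Proof.
apply: psdmx_sum => k _; apply: psdmx_sum => m _.
by apply: psdmxD; apply: psdmxZ;
  [exact: Qmx_psd m (s k) | exact: Qmx_psd | exact: Qhatmx_psd m (s k) | exact: Qhatmx_psd].
Qed.

Lemma Sigma_herm : adjmx (Sigma s i) = Sigma s i.
Proof.
rewrite adjmx_sum; apply: eq_bigr => k _; rewrite adjmx_sum; apply: eq_bigr => m _.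
rewrite adjmxD !adjmxZ Qmx_herm Qhatmx_herm.
by rewrite (ge0_conjc (Qmx_psd m (s k))) (ge0_conjc (Qhatmx_psd m (s k))).
Qed.

Lemma interference_qform (x : 'cV[C]_N) :
  \sum_(k < K | k != i) \sum_(m < N) Smik m x (s k) = qform x (Sigma s i).
Proof.
rewrite qform_sumr; apply: eq_bigr => k _; rewrite qform_sumr; apply: eq_bigr => m _.
by rewrite /Smik qformDr !qformZr; congr (_ + _); exact: mulrC.
Qed.

End InterferenceMatrix.

Section Rayleigh.
Variables (R : realType) (n : nat).
Local Notation C := R[i].

Lemma psdmx_diag (d : 'rV[C]_n) : (forall j, 0 <= d 0 j) -> psdmx (diag_mx d).
Proof.
move=> d_ge0; rewrite diag_mx_sum_delta.
by apply: psdmx_sum => j _; apply/psdmxZ/psdmx_delta.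
Qed.

Lemma adjmx_hermsymmx (A : 'M[C]_n) : adjmx A = A -> A \is hermsymmx.
Proof. by move=> A_herm; apply/is_hermitianmxP; rewrite expr0 scale1r -adjmxE A_herm. Qed.

Lemma eigenvalue_spectral_diag (A : 'M[C]_n) (j : 'I_n) :
  A \is normalmx -> eigenvalue A (spectral_diag A 0 j).
Proof.
move=> /orthomx_spectralP AE; have P_unit := spectral_unit A.
set P := spectralmx A in AE P_unit *.
apply/eigenvalueP; exists (row j P).
  rewrite -row_mul {1}AE !mulmxA mulmxV // mul1mx mul_diag_mx.
  by apply/rowP => k; rewrite !mxE.
apply/eqP => /rowP row0.
have /matrixP/(_ j j) := mulmxV P_unit; rewrite !mxE eqxx big1 => [/eqP|k _].
  by rewrite eq_sym oner_eq0.
by have := row0 k; rewrite !mxE => ->; rewrite mul0r.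
Qed.

Lemma qform_ge_min_eigenvalue (A : 'M[C]_n) (lam : R) (x : 'cV[C]_n) :
  adjmx A = A -> (forall mu, eigenvalue A mu -> lam%:C <= mu) ->
  (lam * sqnorm x)%:C <= qform x A.
Proof.
move=> A_herm lam_min.
have /orthomx_spectralP AE := hermitian_normalmx (adjmx_hermsymmx A_herm).
set P := spectralmx A in AE; set d := spectral_diag A in AE.
have P_unitary : P \is unitarymx := spectral_unitarymx A.
have invP : invmx P = adjmx P by rewrite invmx_unitary // adjmxE.
have shiftE : A - lam%:C%:M = adjmx P *m diag_mx (d - const_mx lam%:C) *m P.
  rewrite linearB /= diag_const_mx mulmxBr mulmxBl -invP -AE.
  by rewrite mul_mx_scalar -scalemxAl mulVmx ?unitarymx_unit // scalemx1.
have : 0 <= qform x (A - lam%:C%:M).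
  have d_ge_lam j : lam%:C <= d 0 j.
    exact/lam_min/eigenvalue_spectral_diag/hermitian_normalmx/adjmx_hermsymmx.
  rewrite shiftE; apply/psdmx_conj/psdmx_diag => j.
  by rewrite !mxE subr_ge0 d_ge_lam.
by rewrite qformBr -scalemx1 qformZr qform1 subr_ge0 -rmorphM.
Qed.

End Rayleigh.

Lemma ler_powRN (R : realType) (a b r : R) :
  0 < a -> a <= b -> 0 <= r -> b `^ (- r) <= a `^ (- r).
Proof.
move=> a_gt0 le_ab r_ge0; have b_gt0 := lt_le_trans a_gt0 le_ab.
rewrite !powRN lef_pV2 ?posrE ?powR_gt0 //.
by apply: (ge0_ler_powR r_ge0); rewrite // nnegrE ltW.
Qed.

Lemma SINR_qform (R : realType) (N K : nat) (N0 P T : R)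
    (s : 'I_K -> 'cV[R[i]]_N) (i : 'I_K) (x : 'cV[R[i]]_N) :
  SINR N0 P T s i x =
    ((6 * N%:R ^+ 2)^-1 * complex.Re (qform x (Sigma s i)) + N0 / (2 * P * T)) `^ (- 2^-1).
Proof. by rewrite /SINR interference_qform. Qed.

Theorem mainTheorem1 (R : realType) (N K : nat) (N0 P T : R)
    (s : 'I_K -> 'cV[R[i]]_N) (i : 'I_K)
    (lammin : R) (u : 'cV[R[i]]_N) :
  (2 <= N)%N -> (2 <= K)%N -> 0 < N0 -> 0 < P -> 0 < T ->
  (* lammin is the minimum eigenvalue of Sigma_i, u a unit eigenvector *)
  Sigma s i *m u = Complex lammin 0 *: u ->
  sqnorm u = 1 ->
  (forall mu : R[i], eigenvalue (Sigma s i) mu -> Complex lammin 0 <= mu) ->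
  let sstar := (Complex (Num.sqrt (N%:R : R)) 0) *: u in
  sqnorm sstar = N%:R /\
  (forall x : 'cV[R[i]]_N, sqnorm x = N%:R ->
     SINR N0 P T s i x <= SINR N0 P T s i sstar) /\
  SINR N0 P T s i sstar = (lammin / (6 * N%:R) + N0 / (2 * P * T)) `^ (- 2^-1).
Proof.
move=> N_ge2 _ N0_gt0 P_gt0 T_gt0 Su_eq u_unit lam_min sstar.
have N_gt0 : (0 : R) < N%:R by rewrite ltr0n (leq_trans _ N_ge2).
have qform_u : qform u (Sigma s i) = lammin%:C.
  by rewrite (qform_eigenvector Su_eq) u_unit rmorph1 mulr1.
have lam_ge0 : 0 <= lammin by rewrite -ler0c -qform_u Sigma_psd.
have Re_qform_sstar : complex.Re (qform sstar (Sigma s i)) = N%:R * lammin.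
  by rewrite qformZl qform_u conjc_real -!rmorphM -expr2 sqr_sqrtr ?ler0n.
have noise_gt0 : 0 < N0 / (2 * P * T) by rewrite divr_gt0 ?mulr_gt0.
have weight_gt0 : 0 < (6 * N%:R ^+ 2 : R)^-1 by rewrite invr_gt0 mulr_gt0 ?exprn_gt0.
split; first by rewrite sqnormZ sqr_sqrtr ?ler0n // u_unit mulr1.
split=> [x x_norm|].
  rewrite !SINR_qform Re_qform_sstar; apply: ler_powRN; last by rewrite invr_ge0.
    by apply: ltr_wpDl => //; apply/mulr_ge0/mulr_ge0; rewrite ?ler0n // ltW.
  rewrite lerD2r; apply: ler_wpM2l; first exact: ltW.
  have := qform_ge_min_eigenvalue x (Sigma_herm s i) lam_min.
  by rewrite x_norm mulrC lecE => /andP[_].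
rewrite SINR_qform Re_qform_sstar; congr ((_ + _) `^ _).
by field; rewrite pnatr_eq0 -lt0n (leq_trans _ N_ge2).
Qed.
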